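(* Let $(G,\mathcal{B}_1,\mathcal{B}_2)$ be a Rota-Baxter system of groups, with descendent operation $\circ$ and cocycle $\Phi$. Then $(G,\circ)$ is a group if and only if $\Phi:G\to G$ is bijective.
   Context: A Rota-Baxter system of groups is a triple $(G,\mathcal{B}_1,\mathcal{B}_2)$ where $G$ is a group and $\mathcal{B}_1,\mathcal{B}_2:G\to G$ are maps (not necessarily homomorphisms) such that for all $a,b\in G$: $\mathcal{B}_1(a)\mathcal{B}_1(b)=\mathcal{B}_1(\mathcal{B}_1(a)b\mathcal{B}_2(a))$ and $\mathcal{B}_2(b)\mathcal{B}_2(a)=\mathcal{B}_2(\mathcal{B}_1(a)b\mathcal{B}_2(a))$. The descendent operation is $a\circ b=\mathcal{B}_1(a)\,b\,\mathcal{B}_2(a)$, and the cocycle is $\Phi(a)=\mathcal{B}_1(a)\mathcal{B}_2(a)$. *)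

From mathcomp Require Import ssreflect ssrfun ssrbool.

Definition group_axioms {G : Type} (mul : G -> G -> G) (one : G) (inv : G -> G) : Prop :=
  (forall a b c, mul a (mul b c) = mul (mul a b) c) /\
  (forall a, mul one a = a /\ mul a one = a) /\
  (forall a, mul (inv a) a = one /\ mul a (inv a) = one).

Definition is_group_op {G : Type} (op : G -> G -> G) : Prop :=
  (forall a b c, op a (op b c) = op (op a b) c) /\
  exists e : G,
    (forall a, op e a = a /\ op a e = a) /\
    (forall a, exists a', op a' a = e /\ op a a' = e).

Definition RB_system {G : Type} (mul : G -> G -> G) (B1 B2 : G -> G) : Prop :=
  forall a b : G,
    mul (B1 a) (B1 b) = B1 (mul (mul (B1 a) b) (B2 a)) /\
    mul (B2 b) (B2 a) = B2 (mul (mul (B1 a) b) (B2 a)).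

Definition descendent {G : Type} (mul : G -> G -> G) (B1 B2 : G -> G) (a b : G) : G :=
  mul (mul (B1 a) b) (B2 a).

Definition cocycle {G : Type} (mul : G -> G -> G) (B1 B2 : G -> G) (a : G) : G :=
  mul (B1 a) (B2 a).

From mathcomp Require Import ssreflect ssrfun ssrbool.

(* The Rota-Baxter identities say exactly that (G, o) is associative, and each
   left translation [a o _] is bijective because it is [b |-> B1(a) b B2(a)].
   Moreover [Phi a = a o 1] is a right translation of (G, o).  In an associative
   structure with bijective left translations, a single injective right
   translation already forces a group structure, and conversely every right
   translation of a group is bijective. *)

Section LeftBijectiveSemigroup.
Context {T : Type} {op : T -> T -> T}.
Hypotheses (opA : associative op) (op_bij : forall a, bijective (op a)).

Lemma group_op_rtrans_bij u : is_group_op op -> bijective (op^~ u).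
Proof.
case=> opA' [e [ope opV]]; have [u' [u'u uu']] := opV u.
by exists (op^~ u') => x /=; rewrite -opA' ?uu' ?u'u; case: (ope x).
Qed.

Lemma rtrans_inj_group_op u : injective (op^~ u) -> is_group_op op.
Proof.
move=> ru_inj; have op_inj a : injective (op a) := bij_inj (op_bij a).
have [div_u _ divKu] := op_bij u; set e := div_u u.
have ue : op u e = u := divKu u.
have op1 x : op e x = x by apply: (op_inj u); rewrite opA ue.
have opx1 x : op x e = x by apply: ru_inj; rewrite /= -opA op1.
split=> //; exists e; split=> [x | x]; first by [].
have [div_x _ divKx] := op_bij x; exists (div_x e).
have xx' : op x (div_x e) = e := divKx e.
by split=> //; apply: (op_inj x); rewrite opA xx' op1 opx1.
Qed.

End LeftBijectiveSemigroup.

Section RotaBaxterSystem.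
Context {G : Type} {mul : G -> G -> G} {one : G} {inv : G -> G}.
Hypothesis groupG : group_axioms mul one inv.
Variables (B1 B2 : G -> G).

Local Notation "a * b" := (mul a b).
Local Notation "a ^-1" := (inv a).

Lemma mulA : associative mul.
Proof. by case: groupG. Qed.

Lemma mul1g a : one * a = a.
Proof. by case: groupG => _ [/(_ a) []]. Qed.

Lemma mulg1 a : a * one = a.
Proof. by case: groupG => _ [/(_ a) []]. Qed.

Lemma mulVg a : a^-1 * a = one.
Proof. by case: groupG => _ [_ /(_ a) []]. Qed.

Lemma mulgV a : a * a^-1 = one.
Proof. by case: groupG => _ [_ /(_ a) []]. Qed.

Lemma descendent_bij a : bijective (descendent mul B1 B2 a).
Proof.
exists (fun c => (B1 a)^-1 * c * (B2 a)^-1) => b; rewrite /descendent.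
- by rewrite -!mulA mulgV mulg1 !mulA mulVg mul1g.
- by rewrite !mulA mulgV mul1g -mulA mulVg mulg1.
Qed.

Lemma cocycle_descendent1 : cocycle mul B1 B2 =1 descendent mul B1 B2 ^~ one.
Proof. by move=> a; rewrite /cocycle /descendent mulg1. Qed.

Hypothesis rbG : RB_system mul B1 B2.

Lemma descendentA : associative (descendent mul B1 B2).
Proof. by move=> a b c; rewrite /descendent; case: (rbG a b) => <- <-; rewrite !mulA. Qed.

End RotaBaxterSystem.

Theorem theorem3p12 (G : Type) (mul : G -> G -> G) (one : G) (inv : G -> G)
  (HG : group_axioms mul one inv) (B1 B2 : G -> G)
  (HRB : RB_system mul B1 B2) :
  is_group_op (descendent mul B1 B2) <-> bijective (cocycle mul B1 B2).
Proof.
have Phi_rtrans := cocycle_descendent1 HG B1 B2.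
split=> [o_group | /bij_inj Phi_inj].
- by apply: (eq_bij (group_op_rtrans_bij one o_group)) => x; rewrite Phi_rtrans.
- apply: (rtrans_inj_group_op (descendentA HG B1 B2 HRB) (descendent_bij HG B1 B2) one).
  by move=> x y; rewrite /= -!Phi_rtrans => /Phi_inj.
Qed.
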